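(* Let $n = 4k+3$ with $k\ge 0$ an integer, and let $m \ge 3n+5$. Then every product $(a,a+2)(b,b+2)\in S_m$ of two even-string transpositions, and every such product of two odd-string transpositions, with $a,a+2,b,b+2$ four distinct numbers, is a product of $n$-crossing permutations over $S_m$.
   Context: For integers $2\le n\le m$ and $1 \le j \le m-n+1$, the $n$-crossing permutation $\pi_j\in S_m$ is $\pi_j=(j,\,j+n-1)(j+1,\,j+n-2)\cdots$, i.e. the involution sending $i \mapsto 2j+n-1-i$ for $j\le i\le j+n-1$ and fixing all other elements of $\{1,\dots,m\}$. The $n$-crossing permutations over $S_m$ are $\pi_1,\dots,\pi_{m-n+1}$. A transposition $(i,i+2)\in S_m$ (with $1\le i\le m-2$) is called an even-string transposition if $i$ is even and an odd-string transposition if $i$ is odd. *)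

From mathcomp Require Import all_boot all_order all_fingroup.
From mathcomp Require Import zify.
Set Implicit Arguments. Unset Strict Implicit. Unset Printing Implicit Defensive.

(* Points of S_m are 1..m; the ordinal x : 'I_m represents the point x+1. *)

Definition invol_on (m : nat) (g : nat -> nat) : bool :=
  [forall x : 'I_m, (1 <= g x.+1 <= m) && (g (g x.+1) == x.+1)].

Definition perm_fun (m : nat) (g : nat -> nat) (x : 'I_m) : 'I_m :=
  if invol_on m g then insubd x (g x.+1).-1 else x.

Lemma perm_fun_invol m g : involutive (@perm_fun m g).
Proof.
move=> x; rewrite /perm_fun; case H: (invol_on m g) => //.
move/forallP: (H) => Hx.
have /andP [/andP [l1 l2] e1] := Hx x.
have hin : (g x.+1).-1 < m by lia.
rewrite (insubdK x hin).
have -> : (g x.+1).-1.+1 = g x.+1 by lia.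
rewrite (eqP e1) /=.
by rewrite /insubd valK.
Qed.

(* The permutation of {1..m} induced by g (identity if g is not an involution of {1..m}) *)
Definition perm_of (m : nat) (g : nat -> nat) : {perm 'I_m} :=
  perm (can_inj (@perm_fun_invol m g)).

Definition cross (n j i : nat) : nat :=
  if (j <= i) && (i <= j + n - 1) then 2 * j + n - 1 - i else i.

Definition crossing_perm (m n j : nat) : {perm 'I_m} := perm_of m (cross n j).

Definition crossing_perms (m n : nat) : {set {perm 'I_m}} :=
  [set crossing_perm m n j.+1 | j : 'I_(m - n + 1)].

Definition swap2 (a i : nat) : nat :=
  if i == a then a + 2 else if i == a + 2 then a else i.

Definition string_transp (m a : nat) : {perm 'I_m} := perm_of m (swap2 a).

From Pilot Require Import Defs.
From mathcomp Require Import all_boot all_order all_fingroup.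
From mathcomp Require Import zify.
Set Implicit Arguments. Unset Strict Implicit. Unset Printing Implicit Defensive.

(* For n >= 3 the word pi_(j+1) pi_(j+2) pi_(j+1) pi_j of four n-crossings is
   the 3-cycle (j, j+n-1, j+n+1).  Conjugating it by pi_(p+2), or, when p is
   too close to m, conjugating the word at j = p+3-n by pi_(p+2-n), gives the
   3-cycle (p, p+2, p+4).  For points x_0, x_1, ... in which every consecutive
   triple carries such a 3-cycle, (x_0 x_1)(x_2 x_3) is a product of two of
   them, and conjugating by (x_j x_(j+1) x_(j+2)) moves the second
   transposition one step further; on the points a, a+2, a+4, ... this reaches
   (a, a+2)(b, b+2). *)

(* Innermost conditions first, so that every case split is on arithmetic. *)
Ltac case_ifs :=
  repeat match goal with |- context [if ?b then _ else _] =>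
    lazymatch b with context [if _ then _ else _] => fail | _ =>
      case: (boolP b) => ?; try (exfalso; lia) end end.

Definition transp (u v i : nat) : nat := if i == u then v else if i == v then u else i.

Lemma transpK u v : involutive (transp u v).
Proof. by move=> i; rewrite /transp; case_ifs; lia. Qed.

Lemma crossK n j : involutive (cross n j).
Proof. by move=> i; rewrite /cross; case_ifs; lia. Qed.

Lemma transp_range m u v i : 1 <= u <= m -> 1 <= v <= m -> 1 <= i <= m ->
  1 <= transp u v i <= m.
Proof. by rewrite /transp; case_ifs. Qed.

Lemma cross_range m n j i : 1 <= j -> j + n - 1 <= m -> 1 <= i <= m ->
  1 <= cross n j i <= m.
Proof. by rewrite /cross; case_ifs; lia. Qed.

Lemma cross_word n j i : 2 <= n ->
  cross n j (cross n j.+1 (cross n j.+2 (cross n j.+1 i))) =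
  transp j (j + n + 1) (transp j (j + n - 1) i).
Proof. by move=> n_ge2; rewrite /cross /transp; case_ifs; lia. Qed.

Lemma involutive_invol_on m g : involutive g -> {homo g : i / 1 <= i <= m} ->
  invol_on m g.
Proof.
move=> gK g_range; apply/forallP => x.
by rewrite g_range ?gK ?eqxx //; apply/andP; split.
Qed.

Lemma invol_on_transp m u v : 1 <= u <= m -> 1 <= v <= m -> invol_on m (transp u v).
Proof.
move=> u_range v_range; apply: involutive_invol_on => [|i]; first exact: transpK.
exact: transp_range.
Qed.

Lemma invol_on_cross m n j : 1 <= j -> j + n - 1 <= m -> invol_on m (cross n j).
Proof.
move=> j_ge1 j_le; apply: involutive_invol_on => [|i]; first exact: crossK.
exact: cross_range.
Qed.

Lemma perm_ofE m g (x : 'I_m) : invol_on m g -> (Defs.perm_of m g x).+1 = g x.+1.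
Proof.
move=> g_inv; rewrite permE /perm_fun g_inv.
have /andP [/andP [g_ge1 g_le] _] := forallP g_inv x.
by rewrite insubdK /= ?inE; lia.
Qed.

Section Points.

Variable m : nat.

Definition pt (i : nat) : 'I_m.+1 := inord i.-1.

Lemma pt_ord (x : 'I_m.+1) : pt x.+1 = x.
Proof. exact: inord_val. Qed.

Lemma val_pt i : 1 <= i <= m.+1 -> pt i = i.-1 :> nat.
Proof. by move=> i_range; rewrite inordK //; lia. Qed.

Lemma pt_inj i j : 1 <= i <= m.+1 -> 1 <= j <= m.+1 -> (pt i == pt j) = (i == j).
Proof. by move=> i_range j_range; rewrite -val_eqE /= !val_pt //; lia. Qed.

Lemma perm_of_pt g i : invol_on m.+1 g -> 1 <= i <= m.+1 ->
  Defs.perm_of m.+1 g (pt i) = pt (g i).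
Proof.
move=> g_inv i_range.
have := perm_ofE (pt i) g_inv; have := forallP g_inv (pt i).
rewrite val_pt // prednK; last lia.
move=> /andP [gi_range _] gi; apply: ord_inj; rewrite val_pt //; lia.
Qed.

Lemma perm_of_transp u v : 1 <= u <= m.+1 -> 1 <= v <= m.+1 ->
  Defs.perm_of m.+1 (transp u v) = tperm (pt u) (pt v).
Proof.
move=> u_range v_range; apply/permP => x; rewrite -[x]pt_ord.
have x_range : 1 <= x.+1 <= m.+1 by rewrite ltn_ord.
rewrite perm_of_pt ?invol_on_transp // permE /= !pt_inj // /transp.
by case: ifP => //; case: ifP.
Qed.

End Points.

Lemma string_transpE m a : 1 <= a -> a + 2 <= m.+1 ->
  string_transp m.+1 a = tperm (pt m a) (pt m (a + 2)).
Proof. by move=> a_ge1 a_le; apply: perm_of_transp; lia. Qed.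

Section Cycle3.

Variable T : finType.
Implicit Types x y z u w : T.
Local Open Scope group_scope.

(* [cycle3 x y z] maps x to y, y to z and z to x, since [(s * t) x = t (s x)]. *)
Definition cycle3 x y z : {perm T} := tperm x y * tperm x z.

Lemma cycle3V x y z : (cycle3 x y z)^-1 = cycle3 x z y.
Proof. by rewrite invMg !tpermV. Qed.

Lemma cycle3J x y z (g : {perm T}) : cycle3 x y z ^ g = cycle3 (g x) (g y) (g z).
Proof. by rewrite conjMg !tpermJ. Qed.

Lemma cycle3_rot x y z : y != x -> y != z -> cycle3 x y z = cycle3 z x y.
Proof.
move=> yx yz; rewrite /cycle3 conjgC tpermJ tpermL tpermD 1?eq_sym //.
by rewrite (tpermC z x).
Qed.

Lemma cycle3D x y z u : x != u -> y != u -> z != u -> cycle3 x y z u = u.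
Proof. by move=> xu yu zu; rewrite permM !tpermD. Qed.

Lemma tpermJ_cycle3 x y z : y != x -> y != z -> tperm x y ^ cycle3 x y z = tperm y z.
Proof. by move=> yx yz; rewrite tpermJ !permM tpermL tpermR tpermD 1?eq_sym // tpermL. Qed.

Lemma mul_tperm_cycle3 x y z w : tperm x y * tperm z w = cycle3 y x z * cycle3 z y w.
Proof. by rewrite /cycle3 mulgA -(mulgA _ _ (tperm z y)) (tpermC y z) tperm2 mulg1 tpermC. Qed.

Variables (H : {group {perm T}}) (f : nat -> T) (N : nat).
Hypothesis f_inj : {in gtn N &, injective f}.
Hypothesis cycle3_mem : forall i, i.+2 < N -> cycle3 (f i) (f i.+1) (f i.+2) \in H.

Lemma mul_tperm_mem i j : i.+1 < j -> j.+1 < N ->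
  tperm (f i) (f i.+1) * tperm (f j) (f j.+1) \in H.
Proof.
have f_neq p q : p < N -> q < N -> p != q -> f p != f q.
  by move=> pN qN; apply: contra => /eqP /f_inj -> //.
have cycle3V_mem p : p.+2 < N -> cycle3 (f p.+1) (f p) (f p.+2) \in H.
  move=> pN; rewrite -cycle3_rot ?f_neq //; try lia.
  by rewrite -cycle3V groupV cycle3_mem.
move=> lt_ij; rewrite -(subnKC lt_ij); elim: (j - i.+2) => [|d IHd] kN.
  by rewrite addn0 mul_tperm_cycle3 groupM ?cycle3V_mem //; lia.
rewrite addnS; set k := i.+2 + d.
have := groupJ (IHd ltac:(lia)) (cycle3_mem (i := k) ltac:(lia)).
by rewrite -/k conjMg tpermJ !cycle3D ?tpermJ_cycle3 // f_neq //; lia.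
Qed.

End Cycle3.

Section Crossings.

Variables m n : nat.
Hypothesis n_ge3 : 3 <= n.

Local Notation G := <<crossing_perms m.+1 n>>%g.
Local Notation pi := (crossing_perm m.+1 n).

Lemma crossing_perm_mem j : 1 <= j -> j + n - 1 <= m.+1 -> pi j \in G.
Proof.
move=> j_ge1 j_le; have j_lt : j.-1 < m.+1 - n + 1 by lia.
by apply/mem_gen/imsetP; exists (Ordinal j_lt); rewrite //= prednK.
Qed.

Lemma crossing_perm_pt j i : 1 <= j -> j + n - 1 <= m.+1 -> 1 <= i <= m.+1 ->
  pi j (pt m i) = pt m (cross n j i).
Proof. by move=> j_ge1 j_le i_range; rewrite perm_of_pt ?invol_on_cross. Qed.

Lemma crossing_word j : 1 <= j -> j + n + 1 <= m.+1 ->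
  (pi j.+1 * pi j.+2 * pi j.+1 * pi j)%g =
  cycle3 (pt m j) (pt m (j + n - 1)) (pt m (j + n + 1)).
Proof.
move=> j_ge1 j_le; apply/permP => x; apply/ord_inj/succn_inj.
rewrite /cycle3 -!perm_of_transp; try lia.
by rewrite !permM !perm_ofE ?invol_on_cross ?invol_on_transp ?cross_word //; lia.
Qed.

Lemma cycle3_step2_mem p : 2 * n <= m.+1 -> 1 <= p -> p + 4 <= m.+1 ->
  cycle3 (pt m p) (pt m (p + 2)) (pt m (p + 4)) \in G.
Proof.
move=> m_ge p_ge1 p_le.
have word_mem j : 1 <= j -> j + n + 1 <= m.+1 ->
    cycle3 (pt m j) (pt m (j + n - 1)) (pt m (j + n + 1)) \in G.
  by move=> j_ge1 j_le; rewrite -crossing_word // !groupM // crossing_perm_mem //; lia.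
have [p_room|p_near_end] := leqP (p + n + 1) m.+1.
  have := groupJ (word_mem p p_ge1 p_room) (@crossing_perm_mem (p + 2) _ _).
  rewrite cycle3J !crossing_perm_pt; try lia.
  have -> : cross n (p + 2) p = p by rewrite /cross; case_ifs.
  have -> : cross n (p + 2) (p + n - 1) = p + 4 by rewrite /cross; case_ifs; lia.
  have -> : cross n (p + 2) (p + n + 1) = p + 2 by rewrite /cross; case_ifs; lia.
  by rewrite -cycle3V groupV; apply; lia.
have := groupJ (word_mem (p + 3 - n) _ _) (@crossing_perm_mem (p + 2 - n) _ _).
rewrite cycle3J !crossing_perm_pt; try lia.
have -> : cross n (p + 2 - n) (p + 3 - n) = p by rewrite /cross; case_ifs; lia.
have -> : cross n (p + 2 - n) (p + 3 - n + n - 1) = p + 2 by rewrite /cross; case_ifs; lia.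
have -> : cross n (p + 2 - n) (p + 3 - n + n + 1) = p + 4 by rewrite /cross; case_ifs; lia.
by apply; lia.
Qed.

Lemma mul_tperm_step2_mem a b :
  2 * n <= m.+1 -> 1 <= a -> a + 4 <= b -> b + 2 <= m.+1 -> odd a = odd b ->
  (tperm (pt m a) (pt m (a + 2)) * tperm (pt m b) (pt m (b + 2)))%g \in G.
Proof.
move=> m_ge a_ge1 ab b_le odd_ab.
have [d def_b] : exists d, b = a + 2 * d.+2 by exists ((b - a) %/ 2 - 2); lia.
pose f i := pt m (a + 2 * i).
have f_inj : {in gtn d.+4 &, injective f}.
  by move=> i j; rewrite !inE => iN jN /eqP; rewrite pt_inj => [/eqP||]; lia.
have f_cycle3 i : i.+2 < d.+4 -> cycle3 (f i) (f i.+1) (f i.+2) \in G.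
  move=> iN; rewrite /f; have -> : a + 2 * i.+1 = a + 2 * i + 2 by lia.
  have -> : a + 2 * i.+2 = a + 2 * i + 4 by lia.
  by apply: cycle3_step2_mem; lia.
have := mul_tperm_mem f_inj f_cycle3 (i := 0) (j := d.+2) isT (leqnn _).
rewrite /f muln0 muln1 addn0 -def_b.
by have -> : a + 2 * d.+3 = b + 2 by lia.
Qed.

End Crossings.

Theorem lemma4p3 (k m a b : nat) :
  3 * (4 * k + 3) + 5 <= m ->
  1 <= a -> a + 2 <= m -> 1 <= b -> b + 2 <= m ->
  odd a = odd b ->
  uniq [:: a; a + 2; b; b + 2] ->
  (string_transp m a * string_transp m b)%g
    \in <<crossing_perms m (4 * k + 3)>>%g.
Proof.
case: m => [|m] m_ge; first lia.
move=> a_ge1 a_le b_ge1 b_le odd_ab; rewrite /= !inE => distinct_ab.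
rewrite !string_transpE //.
have [ab|ba] : a + 4 <= b \/ b + 4 <= a by lia.
  by apply: mul_tperm_step2_mem; lia.
by rewrite -groupV invMg !tpermV; apply: mul_tperm_step2_mem; lia.
Qed.
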